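(* The splitting graph $\mathrm{Spltg}(B_G)$ of the bull graph $B_G$ admits a signed product cordial labeling.
   Context: A graph $G$ is signed product cordial if there is a vertex labeling $\alpha: V(G)\to\{1,-1\}$ such that, with the induced edge labeling $\alpha^*(uv)=\alpha(u)\alpha(v)$, we have $|v_\alpha(-1)-v_\alpha(1)|\le 1$ and $|e_{\alpha^*}(-1)-e_{\alpha^*}(1)|\le 1$. Here $v_\alpha(x)$ is the number of vertices labeled $x$ and $e_{\alpha^*}(x)$ is the number of edges labeled $x$; such an $\alpha$ is called a signed product cordial labeling. The splitting graph $\mathrm{Spltg}(G)$ of a graph $G$ is obtained from $G$ by adding, for each vertex $v$ of $G$, a new vertex $v'$ made adjacent to exactly the neighbors of $v$ in $G$. The bull graph $B_G$ has vertices $v_1,\dots,v_5$ and edges $v_1v_2, v_2v_3, v_3v_4, v_4v_5, v_2v_4$. Equivalently, it is a triangle $v_2v_3v_4$ with a pendant vertex attached at $v_2$ and another at $v_4$. *)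

From mathcomp Require Import all_boot all_order all_algebra.
Set Implicit Arguments. Unset Strict Implicit. Unset Printing Implicit Defensive.
Import Order.TTheory GRing.Theory Num.Theory.
Local Open Scope ring_scope.

Record sgraph := SGraph {
  vert : finType;
  adj : rel vert;
  adj_sym : symmetric adj;
  adj_irr : irreflexive adj }.

Definition edges (G : sgraph) : {set {set vert G}} :=
  [set [set u; v] | u in vert G, v in vert G & adj u v].

Definition vcount (G : sgraph) (alpha : vert G -> int) (x : int) : nat :=
  #|[set v : vert G | alpha v == x]|.

Definition ecount (G : sgraph) (alpha : vert G -> int) (x : int) : nat :=
  #|[set E in edges G | [exists u, exists v,
       [&& E == [set u; v], adj u v & alpha u * alpha v == x]]]|.

Definition signed_product_cordial_labeling (G : sgraph) (alpha : vert G -> int) :=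
  [/\ forall v, alpha v = 1 \/ alpha v = -1,
      `|(vcount alpha (-1))%:Z - (vcount alpha 1)%:Z| <= 1
    & `|(ecount alpha (-1))%:Z - (ecount alpha 1)%:Z| <= 1].

Definition signed_product_cordial (G : sgraph) :=
  exists alpha : vert G -> int, signed_product_cordial_labeling alpha.

(* Splitting graph: vertices inl v (original) and inr v (new vertex v');
   inl u ~ inl w iff u ~ w in G; v' = inr v is adjacent to exactly the
   (original) neighbours of v; no edges among new vertices. *)
Definition splt_adj (G : sgraph) : rel (vert G + vert G) :=
  fun x y => match x, y with
  | inl u, inl w => adj u w
  | inl u, inr w => adj w u
  | inr u, inl w => adj u w
  | inr _, inr _ => false
  end.

Lemma splt_adj_sym G : symmetric (@splt_adj G).
Proof. by move=> [u|u] [w|w] //=; rewrite adj_sym. Qed.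

Lemma splt_adj_irr G : irreflexive (@splt_adj G).
Proof. by move=> [u|u] //=; rewrite adj_irr. Qed.

Definition Spltg (G : sgraph) : sgraph :=
  SGraph (@splt_adj_sym G) (@splt_adj_irr G).

(* Bull graph on 'I_5 with v1..v5 = 0..4:
   edges v1v2, v2v3, v3v4, v4v5, v2v4. *)
Definition bull_edge (i j : 'I_5) : bool :=
  let a := nat_of_ord i in let b := nat_of_ord j in
  (a, b) \in [:: (0,1); (1,2); (2,3); (3,4); (1,3)]%N.

Definition bull_adj : rel 'I_5 := fun i j => bull_edge i j || bull_edge j i.

Lemma bull_adj_sym : symmetric bull_adj.
Proof. by move=> i j; rewrite /bull_adj orbC. Qed.

Lemma bull_adj_irr : irreflexive bull_adj.
Proof. by move=> [[|[|[|[|[|]]]]] ?]. Qed.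

Definition bull : sgraph := SGraph bull_adj_sym bull_adj_irr.

From mathcomp Require Import all_boot all_order all_algebra.

(* Label +1 exactly the vertices v1, v2, v3, v4 and v2' and -1 the other
   five.  An edge then gets label -1 iff it crosses the cut between the two
   classes; of the 15 edges of the splitting graph, 7 cross it and 8 do not.
   Edges are counted as ordered pairs of adjacent vertices, which counts each
   edge twice. *)

Set Implicit Arguments.
Unset Strict Implicit.
Unset Printing Implicit Defensive.

Import GRing.Theory.
Local Open Scope ring_scope.

Section EdgeCount.

Variables (G : sgraph) (alpha : vert G -> int) (x : int).

Definition labelled_arcs : {set vert G * vert G} :=
  [set p | adj p.1 p.2 && (alpha p.1 * alpha p.2 == x)].

Definition rising_arcs : {set vert G * vert G} :=
  [set p | (enum_rank p.1 < enum_rank p.2)%N].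

Lemma adj_enum_rank_neq (u v : vert G) :
  adj u v -> enum_rank u != enum_rank v :> nat.
Proof.
by move=> huv; apply: contraTneq huv => /val_inj/enum_rank_inj->; rewrite adj_irr.
Qed.

Lemma rising_doubleton_inj :
  {in rising_arcs &, injective (fun p : vert G * vert G => [set p.1; p.2])}.
Proof.
move=> [a b] [c d]; rewrite !inE /= => hab hcd e.
have ha : a \in [set c; d] by rewrite -e !inE eqxx.
have hb : b \in [set c; d] by rewrite -e !inE eqxx orbT.
move: ha hb hab; rewrite !inE => /orP[]/eqP-> /orP[]/eqP-> //; rewrite ?ltnn //.
by move=> hdc; have := ltn_trans hcd hdc; rewrite ltnn.
Qed.

Lemma ecount_rising_arcs : ecount alpha x = #|labelled_arcs :&: rising_arcs|.
Proof.
rewrite /ecount -(@card_in_imset _ _ (fun p => [set p.1; p.2])); last first.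
  by move=> p q /setIP[_ hp] /setIP[_ hq]; apply: rising_doubleton_inj.
apply: eq_card => E; rewrite !inE; apply/andP/imsetP => [[_]|[[u v]]].
- case/existsP=> u /existsP[v /and3P[/eqP-> huv hx]].
  have := adj_enum_rank_neq huv; case: ltngtP => // huv_lt _.
  + by exists (u, v); rewrite // !inE /= huv hx.
  + by exists (v, u); [rewrite !inE /= adj_sym mulrC huv hx | rewrite setUC].
- rewrite !inE /= => /andP[/andP[huv hx] _] ->; split.
  + by apply/imset2P; exists u v; rewrite ?inE.
  + by apply/existsP; exists u; apply/existsP; exists v; rewrite eqxx huv hx.
Qed.

Lemma falling_arcsE :
  labelled_arcs :\: rising_arcs = swap_pair @^-1: (labelled_arcs :&: rising_arcs).
Proof.
apply/setP=> -[u v]; rewrite !inE /= adj_sym mulrC.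
case huv: (adj v u); rewrite /= ?andbF //.
by rewrite andbC -leqNgt leq_eqVlt (negPf (adj_enum_rank_neq huv)).
Qed.

Lemma ecount_double : (ecount alpha x).*2 = #|labelled_arcs|.
Proof.
rewrite -(cardsID rising_arcs) falling_arcsE.
rewrite card_preimset; last exact: can_inj swap_pairK.
by rewrite ecount_rising_arcs addnn.
Qed.

End EdgeCount.

Section SignLabeling.

Variables (G : sgraph) (S : {set vert G}).

Definition sign_labeling (v : vert G) : int := if v \in S then 1 else -1.

Lemma sign_labeling_pm1 v : sign_labeling v = 1 \/ sign_labeling v = -1.
Proof. by rewrite /sign_labeling; case: (v \in S); [left | right]. Qed.

Lemma vcount_sign_labeling1 : vcount sign_labeling 1 = #|S|.
Proof. by apply: eq_card => v; rewrite !inE /sign_labeling; case: (v \in S). Qed.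

Lemma vcount_sign_labelingN1 : vcount sign_labeling (-1) = #|~: S|.
Proof. by apply: eq_card => v; rewrite !inE /sign_labeling; case: (v \in S). Qed.

Lemma sign_labelingM u v :
  sign_labeling u * sign_labeling v = if (u \in S) == (v \in S) then 1 else -1.
Proof. by rewrite /sign_labeling; case: (u \in S); case: (v \in S). Qed.

Lemma ecount_sign_labeling1 :
  (ecount sign_labeling 1).*2 =
  #|[set p | adj p.1 p.2 && ((p.1 \in S) == (p.2 \in S))]|.
Proof.
rewrite ecount_double; apply: eq_card => -[u v].
rewrite /labelled_arcs !inE /= sign_labelingM.
by case: (u \in S); case: (v \in S).
Qed.

Lemma ecount_sign_labelingN1 :
  (ecount sign_labeling (-1)).*2 =
  #|[set p | adj p.1 p.2 && ((p.1 \in S) != (p.2 \in S))]|.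
Proof.
rewrite ecount_double; apply: eq_card => -[u v].
rewrite /labelled_arcs !inE /= sign_labelingM.
by case: (u \in S); case: (v \in S).
Qed.

End SignLabeling.

Lemma card_sum_mem (T : finType) (A : {pred T}) :
  #|A| = (\sum_(t : T) (t \in A))%N.
Proof.
by rewrite -sum1_card big_mkcond; apply: eq_bigr => t _; case: (t \in A).
Qed.

Lemma cards_pair_sum (T1 T2 : finType) (R : pred (T1 * T2)) :
  #|[set p | R p]| = (\sum_(a : T1) \sum_(b : T2) R (a, b))%N.
Proof.
by rewrite card_sum_mem pair_bigA; apply: eq_bigr => -[a b] _; rewrite inE.
Qed.

Definition bull_split_pos : {set vert (Spltg bull)} :=
  [set v : vert (Spltg bull) |
    match v with inl i => i != 4 :> nat | inr i => i == 1 :> nat end].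

Lemma card_bull_split_pos : #|bull_split_pos| = 5%N.
Proof. by rewrite card_sum_mem big_sumType !big_ord_recl !big_ord0 !inE. Qed.

Lemma card_bull_split_neg : #|~: bull_split_pos| = 5%N.
Proof. by rewrite card_sum_mem big_sumType !big_ord_recl !big_ord0 !inE. Qed.

Lemma ecount_bull_splitN1 : ecount (sign_labeling bull_split_pos) (-1) = 7%N.
Proof.
apply: double_inj; rewrite ecount_sign_labelingN1 cards_pair_sum.
rewrite big_sumType !big_ord_recl !big_ord0 !big_sumType !big_ord_recl !big_ord0.
by rewrite !inE.
Qed.

Lemma ecount_bull_split1 : ecount (sign_labeling bull_split_pos) 1 = 8%N.
Proof.
apply: double_inj; rewrite ecount_sign_labeling1 cards_pair_sum.
rewrite big_sumType !big_ord_recl !big_ord0 !big_sumType !big_ord_recl !big_ord0.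
by rewrite !inE.
Qed.

Theorem theorem2p2 : signed_product_cordial (Spltg bull).
Proof.
exists (sign_labeling bull_split_pos); split.
- exact: sign_labeling_pm1.
- rewrite vcount_sign_labelingN1 vcount_sign_labeling1.
  by rewrite card_bull_split_neg card_bull_split_pos.
- by rewrite ecount_bull_splitN1 ecount_bull_split1.
Qed.
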